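(* For every fixed positive integer $p$, $$\lim_{d\to\infty}\frac{1}{d}\cdot\frac{|B(d,p)\cap\mathbb{P}^d_\circ|}{\kappa(B(d,p)\cap\mathbb{P}^d_\circ)}=\frac{1}{p}.$$
   Context: A point of $\mathbb{Z}^d$ is primitive if its coordinates are relatively prime; $\mathbb{P}^d_\circ$ denotes the set of primitive points of $\mathbb{Z}^d$ whose first non-zero coordinate is positive. $B(d,p)=\{x\in\mathbb{R}^d:\|x\|_1\le p\}$. For a finite $\mathcal{X}\subset\mathbb{R}^d$, $\kappa(\mathcal{X})=\max_{1\le i\le d}\sum_{x\in\mathcal{X}}|x_i|$. *)

From HB Require Import structures.
From mathcomp Require Import all_boot all_order all_algebra.
From mathcomp Require Import all_classical all_reals all_analysis.
Set Implicit Arguments. Unset Strict Implicit. Unset Printing Implicit Defensive.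
Import Order.TTheory GRing.Theory Num.Theory.

Definition l1norm (d : nat) (x : 'I_d -> int) : nat := (\sum_(i < d) `|x i|%N)%N.

(* primitive: coordinates relatively prime, i.e. gcd of all coordinates is 1
   (the zero vector has gcd 0 and is not primitive). *)
Definition primitive (d : nat) (x : 'I_d -> int) : bool :=
  (\big[gcdn/0%N]_(i < d) `|x i|%N) == 1%N.

Definition first_nonzero_pos (d : nat) (x : 'I_d -> int) : bool :=
  [exists i : 'I_d, (0 < x i)%R && [forall j : 'I_d, (j < i)%N ==> (x j == 0)]].

(* Every point with ||x||_1 <= p has all coordinates in [-p, p]; we encode such
   points injectively by {ffun 'I_d -> 'I_(2p+1)} via x_i = v_i - p. *)
Definition decode (p d : nat) (v : {ffun 'I_d -> 'I_(2 * p + 1)}) : 'I_d -> int :=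
  fun i => ((v i : nat)%:Z - p%:Z)%R.

Definition BP (p d : nat) : {set {ffun 'I_d -> 'I_(2 * p + 1)}} :=
  [set v | [&& (l1norm (decode v) <= p)%N, primitive (decode v)
             & first_nonzero_pos (decode v)]].

Definition kappa (p d : nat) : nat :=
  (\max_(i < d) \sum_(v in BP p d) `|decode v i|%N)%N.

From Pilot Require Import Defs.
From HB Require Import structures.
From mathcomp Require Import all_boot all_order all_algebra perm.
From mathcomp Require Import all_classical all_reals all_analysis.
From mathcomp Require Import zify ring.
Import Order.TTheory GRing.Theory Num.Theory.
Import numFieldNormedType.Exports.
Import Pilot.Defs. (* so that [decode] is Defs.decode, not choice's *)

(* Let S be the sum of the l1-norms of the points of B(d,p) ∩ P°.  Sign changes
   and permutations of coordinates act on the set of all primitive points of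
   B(d,p), whose coordinate sums are twice those over P°; hence all coordinate
   sums over P° are equal and d κ = S, so the quotient is |P° ∩ B| / S.
   Trivially S <= p |P° ∩ B|.  Conversely, a point of norm < p has at least
   d - p zero coordinates, and putting a 1 into any of them gives a primitive
   point of B(d,p), which has at most p coordinates equal to 1; by double
   counting, the number g of points of norm < p satisfies g (d - p) <= 2 p |P° ∩ B|.
   Since S >= p (|P° ∩ B| - g), we get S / |P° ∩ B| = p - O(p^2 / d). *)

Set Implicit Arguments. Unset Strict Implicit. Unset Printing Implicit Defensive.
Local Open Scope ring_scope.

Lemma double_count (I J : finType) (A : {set I}) (r : I -> J -> bool) :
  (\sum_(i in A) #|[set j | r i j]| = \sum_j #|[set i in A | r i j]|)%N.
Proof.
under eq_bigr do rewrite -sum1dep_card.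
rewrite (exchange_big_dep xpredT) //=; apply: eq_bigr => j _.
by rewrite sum1dep_card; apply: eq_card => i; rewrite !inE.
Qed.

Section IntegerPoints.
Variable d : nat.
Implicit Types (x : 'I_d -> int) (s : {perm 'I_d}).

Lemma l1norm_opp x : l1norm (fun i => - x i) = l1norm x.
Proof. by apply: eq_bigr => i _; rewrite abszN. Qed.

Lemma primitive_opp x : primitive (fun i => - x i) = primitive x.
Proof. by rewrite /primitive (eq_bigr _ (fun i _ => abszN (x i))). Qed.

Lemma l1norm_perm s x : l1norm (x \o s) = l1norm x.
Proof. by rewrite /l1norm [RHS](reindex_inj (@perm_inj _ s)). Qed.

Lemma primitive_perm s x : primitive (x \o s) = primitive x.
Proof. by rewrite /primitive [in RHS](reindex_inj (@perm_inj _ s)). Qed.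

Lemma primitive_neq0 x : primitive x -> exists i, x i != 0.
Proof.
apply: contraPP => /forallNP x0; rewrite /primitive big1 // => i _.
by move/negP/negPn/eqP: (x0 i) => ->.
Qed.

Lemma card_le_l1norm x (J : {set 'I_d}) :
  {in J, forall j, x j != 0} -> (#|J| <= l1norm x)%N.
Proof.
move=> Jx; rewrite -sum1_card /l1norm [X in (_ <= X)%N](bigID (mem J)) /=.
by apply: leq_trans (leq_addr _ _); apply: leq_sum => j /Jx; rewrite absz_gt0.
Qed.

Lemma first_nonzero_posE x i : x i != 0 -> (forall j : 'I_d, (j < i)%N -> x j = 0) ->
  first_nonzero_pos x = (0 < x i).
Proof.
move=> xi0 xj0; apply/existsP/idP => [[k /andP[xk0 /forallP xk]]|xi_gt0].
  case: (ltngtP k i) => [/xj0 xk_eq0|ik|/val_inj <- //].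
  - by rewrite xk_eq0 ltxx in xk0.
  - by move: (xk i); rewrite ik (negbTE xi0).
by exists i; rewrite xi_gt0; apply/forallP => j; apply/implyP => /xj0->.
Qed.

Lemma first_nonzero_pos_opp x i : x i != 0 ->
  first_nonzero_pos (fun j => - x j) = ~~ first_nonzero_pos x.
Proof.
move=> xi0.
have [k xk0 kmin] := @arg_minnP _ i (fun j => x j != 0) val xi0.
have xj0 (j : 'I_d) : (j < k)%N -> x j = 0.
  by move=> jk; apply/eqP; apply: contraTT jk => /kmin; rewrite -leqNgt.
rewrite (first_nonzero_posE xk0 xj0) (@first_nonzero_posE _ k) ?oppr_eq0 //.
  by rewrite oppr_gt0 ltNge le0r (negbTE xk0).
by move=> j /xj0->; rewrite oppr0.
Qed.

End IntegerPoints.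

Section Codes.
Variables p d : nat.
Local Notation code := {ffun 'I_d -> 'I_(2 * p + 1)}.
Implicit Types (v : code) (s : {perm 'I_d}).

Definition negc v : code := [ffun i => rev_ord (v i)].
Definition permc s v : code := [ffun i => v (s i)].

Lemma decode_negc v : decode (negc v) = (fun i => - decode v i).
Proof.
apply: funext => i; rewrite /decode ffunE /=.
have := ltn_ord (v i); move: (nat_of_ord (v i)) => a; lia.
Qed.

Lemma decode_permc s v : decode (permc s v) = decode v \o s.
Proof. by apply: funext => i; rewrite /decode ffunE. Qed.

Lemma negcK : involutive negc.
Proof. by move=> v; apply/ffunP => i; rewrite !ffunE rev_ordK. Qed.

Lemma permcK s : cancel (permc s) (permc s^-1).
Proof. by move=> v; apply/ffunP => i; rewrite !ffunE permKV. Qed.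

Definition prim_ball : {set code} :=
  [set v | (l1norm (decode v) <= p)%N && primitive (decode v)].

Lemma negc_prim_ball v : (negc v \in prim_ball) = (v \in prim_ball).
Proof. by rewrite !inE decode_negc l1norm_opp primitive_opp. Qed.

Lemma permc_prim_ball s v : (permc s v \in prim_ball) = (v \in prim_ball).
Proof. by rewrite !inE decode_permc l1norm_perm primitive_perm. Qed.

Lemma sum_prim_ball_sym (f : code -> nat) : (forall v, f (negc v) = f v) ->
  (\sum_(v in prim_ball) f v = 2 * \sum_(v in BP p d) f v)%N.
Proof.
move=> f_negc.
rewrite (bigID (fun v => first_nonzero_pos (decode v))) /= [RHS]mul2n -addnn.
have BPE v : (v \in BP p d) = (v \in prim_ball) && first_nonzero_pos (decode v).
  by rewrite !inE andbA.
congr (_ + _); first by apply: eq_bigl => v; rewrite BPE.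
rewrite (reindex_inj (inv_inj negcK)); apply: eq_big => [v|v _]; last exact: f_negc.
rewrite BPE negc_prim_ball; case: (boolP (v \in prim_ball)) => //.
rewrite inE => /andP[_ /primitive_neq0[i vi0]].
by rewrite decode_negc (first_nonzero_pos_opp vi0) negbK.
Qed.

Lemma card_prim_ball : #|prim_ball| = (2 * #|BP p d|)%N.
Proof. by rewrite -!sum1_card; apply: sum_prim_ball_sym. Qed.

Definition coord_sum (i : 'I_d) : nat := (\sum_(v in BP p d) `|decode v i|%N)%N.

Lemma coord_sum_const i j : coord_sum i = coord_sum j.
Proof.
(* BP is not stable under permutation of coordinates, but prim_ball is. *)
have dbl k : (\sum_(v in prim_ball) `|decode v k|%N = 2 * coord_sum k)%N.
  by apply: sum_prim_ball_sym => v; rewrite decode_negc abszN.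
apply/eqP; rewrite -(eqn_pmul2l (isT : 0 < 2)%N) -!dbl.
rewrite (reindex_inj (can_inj (permcK (tperm i j)))); apply/eqP/eq_big => v.
  by rewrite permc_prim_ball.
by rewrite decode_permc /= tpermL.
Qed.

Lemma kappaE i : kappa p d = coord_sum i.
Proof.
apply/eqP; rewrite eqn_leq; apply/andP; split.
  by apply/bigmax_leqP => j _; rewrite -/(coord_sum j) (coord_sum_const j i).
exact: (leq_bigmax (F := coord_sum)).
Qed.

Definition l1norm_sum : nat := (\sum_(v in BP p d) l1norm (decode v))%N.

Lemma dim_mul_kappa : (d * kappa p d)%N = l1norm_sum.
Proof.
rewrite /l1norm_sum /l1norm exchange_big /= (eq_bigr (fun=> kappa p d)) => [|i _].
  by rewrite sum_nat_const card_ord.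
exact/esym/kappaE.
Qed.

Lemma l1norm_sum_le : (l1norm_sum <= #|BP p d| * p)%N.
Proof.
by rewrite -sum_nat_const /l1norm_sum; apply: leq_sum => v; rewrite inE => /and3P[].
Qed.

End Codes.


Section SmallPoints.
Variables p d : nat.
Hypothesis p_gt0 : (0 < p)%N.
Local Notation code := {ffun 'I_d -> 'I_(2 * p + 1)}.
Implicit Types (v : code).

Definition small_ball : {set code} := [set v | (l1norm (decode v) < p)%N].

(* [p.+1] codes the value 1; it is in range as 0 < p, so the default of
   [insubd] is never used. *)
Definition set_one (j : 'I_d) v : code :=
  [ffun i => if i == j then insubd (v i) p.+1 else v i].

Lemma decode_set_one j v i : decode (set_one j v) i = if i == j then 1 else decode v i.
Proof.
rewrite /decode ffunE; case: eqP => // _.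
by rewrite insubdK /=; lia.
Qed.

Lemma set_one_prim_ball j v :
  v \in small_ball -> decode v j = 0 -> set_one j v \in prim_ball p d.
Proof.
rewrite !inE => v_small vj0; apply/andP; split.
  rewrite /l1norm (bigD1 j) //= decode_set_one eqxx add1n.
  apply: leq_trans v_small; rewrite ltnS [X in (_ <= X)%N](bigD1 j) //= vj0.
  by apply: eq_leq; apply: eq_bigr => i /negbTE ij; rewrite decode_set_one ij.
rewrite /primitive -dvdn1; apply: (biggcdn_inf j) => //.
by rewrite decode_set_one eqxx.
Qed.

Lemma card_small_zero_le j : (#|[set v in small_ball | decode v j == 0]|
  <= #|[set v in prim_ball p d | decode v j == 1]|)%N.
Proof.
have set_one_inj : {in [set v in small_ball | decode v j == 0] &, injective (set_one j)}.
  move=> v w; rewrite !inE => /andP[_ /eqP vj0] /andP[_ /eqP wj0] /ffunP vw.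
  apply/ffunP => i; have := vw i; rewrite !ffunE; case: eqP => [->|//] _.
  by apply: ord_inj; move: vj0 wj0 => /subr0_eq[->] /subr0_eq[->].
rewrite -(card_in_imset set_one_inj); apply: subset_leq_card.
apply/fintype.subsetP => _ /imsetP[v + ->]; rewrite inE => /andP[v_small /eqP vj0].
by rewrite inE set_one_prim_ball // decode_set_one eqxx.
Qed.

Lemma card_small_ball :
  (#|small_ball| * d <= 2 * #|BP p d| * p + #|small_ball| * p)%N.
Proof.
have zeros v : (d <= #|[set j | decode v j == 0]| + l1norm (decode v))%N.
  rewrite -[d in leqLHS]card_ord -(cardsC [set j | decode v j == 0]) leq_add2l.
  by apply: card_le_l1norm => j; rewrite !inE.
have ones v : v \in prim_ball p d -> (#|[set j | decode v j == 1]| <= p)%N.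
  rewrite inE => /andP[v_le _]; apply: leq_trans v_le.
  by apply: card_le_l1norm => j; rewrite inE => /eqP->.
have sum_zeros : (\sum_(v in small_ball) #|[set j | decode v j == 0]|
                   <= 2 * #|BP p d| * p)%N.
  rewrite double_count -card_prim_ball -sum_nat_const.
  apply: (@leq_trans (\sum_(v in prim_ball p d) #|[set j | decode v j == 1]|)).
    by rewrite double_count; apply: leq_sum => j _; apply: card_small_zero_le.
  exact: leq_sum.
apply: (@leq_trans (\sum_(v in small_ball) (#|[set j | decode v j == 0]| + p))).
  rewrite -sum_nat_const; apply: leq_sum => v; rewrite inE => v_small.
  by apply: leq_trans (zeros v) _; rewrite leq_add2l ltnW.
by rewrite big_split /= sum_nat_const leq_add2r.
Qed.

Lemma l1norm_sum_ge : (#|BP p d| * p <= l1norm_sum p d + #|small_ball| * p)%N.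
Proof.
rewrite -sum_nat_const /l1norm_sum (bigID (mem small_ball)) /= addnC leq_add //.
  apply: (@leq_trans (\sum_(v in BP p d | v \notin small_ball) l1norm (decode v))).
    by apply: leq_sum => v /andP[_]; rewrite inE -leqNgt.
  by rewrite [leqRHS](bigID (mem small_ball)) leq_addl.
rewrite sum_nat_const leq_mul2r; apply/orP; right.
by apply/subset_leq_card/fintype.subsetP => v /andP[].
Qed.

Lemma card_BP_gt0 : (0 < d)%N -> (0 < #|BP p d|)%N.
Proof.
move=> d_gt0; have p_lt : (p < 2 * p + 1)%N by lia.
pose zero : code := [ffun=> Ordinal p_lt].
have zero0 i : decode zero i = 0 by rewrite /decode ffunE subrr.
have zero_small : zero \in small_ball.
  by rewrite inE /l1norm big1 // => i _; rewrite zero0.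
pose i0 : 'I_d := Ordinal d_gt0.
apply/card_gt0P; exists (set_one i0 zero).
have := set_one_prim_ball zero_small (zero0 i0); rewrite !inE => /andP[-> ->].
rewrite (@first_nonzero_posE _ _ i0) ?decode_set_one ?eqxx //.
Qed.

Lemma l1norm_sum_deficit : (2 * p < d)%N ->
  (#|BP p d| * p * d.+1 <= l1norm_sum p d * d.+1 + 4 * p ^ 2 * #|BP p d|)%N.
Proof.
(* g (d - p) <= 2 p |BP| and |BP| p <= S + g p, with d + 1 <= 2 (d - p). *)
by have := l1norm_sum_ge; have := card_small_ball; nia.
Qed.

End SmallPoints.

Local Open Scope classical_set_scope.

Lemma harmonic_squeeze (R : archiRealFieldType) (u : nat -> R) (c C : R) :
  (\forall n \near \oo, c - C / n.+1%:R <= u n <= c) -> u @ \oo --> c.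
Proof.
move=> u_near; apply: (squeeze_cvgr u_near _ (cvg_cst c)).
rewrite -[X in _ --> X]subr0 -(mulr0 C).
by apply: cvgB; [exact: cvg_cst | exact: cvgMl_tmp cvg_harmonic].
Qed.

Lemma ler_sub_div (R : realFieldType) (b s c C n : R) : 0 < b -> 0 < n ->
  b * c * n <= s * n + C * b -> c - C / n <= s / b.
Proof.
move=> b_gt0 n_gt0 le_bcn; rewrite -subr_ge0.
have -> : s / b - (c - C / n) = (s * n + C * b - b * c * n) / (b * n).
  by field; rewrite ?gt_eqF.
by rewrite divr_ge0 ?subr_ge0 // ltW // mulr_gt0.
Qed.

Theorem theorem7p4 (R : realType) (p : nat) (hp : (0 < p)%N) :
  (fun d : nat => (d%:R)^-1 * ((#|BP p d|%:R : R) / (kappa p d)%:R))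
    @ \oo --> (p%:R : R)^-1.
Proof.
pose b d : R := #|BP p d|%:R.
pose s d : R := (l1norm_sum p d)%:R.
have -> : (fun d : nat => (d%:R)^-1 * ((#|BP p d|%:R : R) / (kappa p d)%:R))
          = (fun d => (s d / b d)^-1).
  by apply: funext => d; rewrite /s -dim_mul_kappa natrM invf_div invfM mulrCA.
apply: cvgV; first by rewrite pnatr_eq0 -lt0n.
apply: (@harmonic_squeeze _ _ _ (4 * p%:R ^+ 2)).
near=> d; have d_gt : (2 * p < d)%N by near: d; apply: nbhs_infty_gt.
have b_gt0 : 0 < b d by rewrite ltr0n card_BP_gt0 //; lia.
apply/andP; split.
  apply: ler_sub_div => //.
  by rewrite /b /s -natrX -!natrM -!natrD ler_nat l1norm_sum_deficit.
by rewrite ler_pdivrMr // /b /s -natrM ler_nat [leqRHS]mulnC l1norm_sum_le.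
Unshelve. all: by end_near.
Qed.
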